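(* Let $d_x, d_1, d_2 \ge 1$ be integers and let $\sigma:\mathbb{R}\to\mathbb{R}$ be a continuous piecewise linear function with $p \ge 2$ linear pieces. Let $\alpha_1,\alpha_2\in[0,1]$ be such that $\alpha_1 d_1$ and $\alpha_2 d_2$ are integers. Consider the architecture of selectively linearized fully connected networks $f_W:\mathbb{R}^{d_x}\to\mathbb{R}$ with two hidden layers of widths $d_1$ and $d_2$: $$z^1 = W^1 x + b^1,\quad a^1 = \phi_1(z^1),\quad z^2 = W^2 a^1 + b^2,\quad a^2=\phi_2(z^2),\quad f_W(x) = W^3 a^2 + b^3,$$ where $W^1\in\mathbb{R}^{d_1\times d_x}$, $W^2\in\mathbb{R}^{d_2\times d_1}$, $W^3\in\mathbb{R}^{1\times d_2}$, $b^1\in\mathbb{R}^{d_1}$, $b^2\in\mathbb{R}^{d_2}$, $b^3\in\mathbb{R}$ are the learnable parameters $W$, and for $l\in\{1,2\}$ the map $\phi_l$ acts coordinatewise by $$(\phi_l(z))_k = \begin{cases}\sigma(z_k) & \text{if } k\in\{1,\dots,\alpha_l d_l\},\\ z_k & \text{if } k\in\{\alpha_l d_l+1,\dots,d_l\}.\end{cases}$$ Then the memorization capacity of this architecture is at most $$\alpha_1\alpha_2 d_1 d_2\, p(p-1) + \alpha_2 d_2 (p-1) + \alpha_1(1-\alpha_2) d_1 d_2 (p-1) + 2.$$ In particular, when $\sigma$ is the ReLU ($p=2$), the memorization capacity is at most $\alpha_1(1+\alpha_2) d_1 d_2 + \alpha_2 d_2 + 2$.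
   Context: Memorization capacity: for a network architecture $f_W$ with learnable parameters $W$ and input dimension $d_x$, the memorization capacity is the largest $N$ such that for every choice of inputs $x_1,\dots,x_N\in\mathbb{R}^{d_x}$ (pairwise distinct) and every choice of labels $y_1,\dots,y_N\in[-1,1]$, there exist parameters $W$ with $f_W(x_i)=y_i$ for all $1\le i\le N$. A function $\mathbb{R}\to\mathbb{R}$ has ''$p$ linear pieces'' if $\mathbb{R}$ can be partitioned into $p$ intervals on each of which it is affine (and not fewer). The neurons with index $k\le \alpha_l d_l$ in layer $l$ keep the nonlinearity; the remaining ones are replaced by the identity (''linearized''). *)

From HB Require Import structures.
From mathcomp Require Import all_boot all_order all_algebra.
From mathcomp Require Import all_classical all_reals topology normedtype.
Set Implicit Arguments. Unset Strict Implicit. Unset Printing Implicit Defensive.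
Import Order.TTheory GRing.Theory Num.Theory.
Import numFieldNormedType.Exports.
Local Open Scope ring_scope.

Definition affine_on {R : realType} (sigma : R -> R) (I : interval R) : Prop :=
  exists a b : R, forall x : R, x \in I -> sigma x = a * x + b.

Definition pw_affine_partition {R : realType} (sigma : R -> R) (p : nat) : Prop :=
  exists I : 'I_p -> interval R,
    (forall x : R, exists! i : 'I_p, x \in I i) /\
    (forall i : 'I_p, affine_on sigma (I i)).

Definition has_linear_pieces {R : realType} (sigma : R -> R) (p : nat) : Prop :=
  pw_affine_partition sigma p /\
  forall q : nat, (q < p)%N -> ~ pw_affine_partition sigma q.

Definition sel_act {R : realType} (sigma : R -> R) (k : nat) {d : nat}
  (z : 'cV[R]_d) : 'cV[R]_d :=
  \col_(i < d) (if (i < k)%N then sigma (z i 0) else z i 0).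

Definition net {R : realType} (sigma : R -> R) (k1 k2 : nat) {dx d1 d2 : nat}
  (W1 : 'M[R]_(d1, dx)) (b1 : 'cV[R]_d1)
  (W2 : 'M[R]_(d2, d1)) (b2 : 'cV[R]_d2)
  (W3 : 'M[R]_(1, d2)) (b3 : R) (x : 'cV[R]_dx) : R :=
  let a1 := sel_act sigma k1 (W1 *m x + b1) in
  let a2 := sel_act sigma k2 (W2 *m a1 + b2) in
  (W3 *m a2) 0 0 + b3.

Definition memorizes {R : realType} (sigma : R -> R) (k1 k2 dx d1 d2 : nat)
  (N : nat) : Prop :=
  forall (x : 'I_N -> 'cV[R]_dx), injective x ->
  forall (y : 'I_N -> R), (forall i, -1 <= y i <= 1) ->
  exists (W1 : 'M[R]_(d1, dx)) (b1 : 'cV[R]_d1)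
         (W2 : 'M[R]_(d2, d1)) (b2 : 'cV[R]_d2)
         (W3 : 'M[R]_(1, d2)) (b3 : R),
    forall i : 'I_N, net sigma k1 k2 W1 b1 W2 b2 W3 b3 (x i) = y i.

Definition relu {R : realType} (x : R) : R := Num.max x 0.

(* Along the line of inputs [t e_0] the network is a piecewise linear function
   of [t], and its breakpoints can be counted layer by layer: if the inputs of a
   layer are affine between consecutive points of a set [C], each neuron with
   activation [sigma] (which has [p - 1] breakpoints) adds at most
   [(p - 1) (|C| + 1)] new ones, namely the points where an affine piece of its
   pre-activation crosses a breakpoint of [sigma].  Two layers thus give at most
   [k1 (p - 1) + k2 (p - 1) (k1 (p - 1) + 1)] breakpoints.  Conversely, a
   piecewise linear function taking the alternating values [(-1)^i] at
   [i = 0, ..., N - 1] changes the sign of its slope between consecutive unit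
   intervals, so it has at least [N - 2] breakpoints.  Breakpoints are handled
   combinatorially: [pwlin g cs] says that [g] is affine on every interval
   containing no point of [cs]. *)

From HB Require Import structures.
From mathcomp Require Import all_boot all_order all_algebra.
From mathcomp Require Import all_classical all_reals topology normedtype.
From mathcomp Require Import ring lra zify.
Set Implicit Arguments. Unset Strict Implicit. Unset Printing Implicit Defensive.
Import Order.TTheory GRing.Theory Num.Theory.
Import numFieldNormedType.Exports.
Local Open Scope ring_scope.

Lemma count_ltn_sub (T : eqType) (a1 a2 : pred T) (s : seq T) x :
  subpred a1 a2 -> x \in s -> a2 x -> ~~ a1 x -> (count a1 s < count a2 s)%N.
Proof.
move=> sub; elim: s => //= y s IH; rewrite inE => /orP[/eqP-> a2x a1x | xs a2x a1x].
  by rewrite a2x (negbTE a1x) add0n add1n ltnS sub_count.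
rewrite -addnS; apply: leq_add (IH xs a2x a1x).
by case: (a1 y) (sub y) => // /(_ isT) ->.
Qed.

Lemma sum_ord_ltn n k : (\sum_(j < n) (j < k) = minn n k)%N.
Proof.
elim: n => [|n IH]; first by rewrite big_ord0 min0n.
by rewrite big_ord_recr /= IH; case: ltnP => /= nk; lia.
Qed.

Section PiecewiseLinear.
Variable R : realType.
Implicit Types (f g h : R -> R) (cs : seq R) (x y z : R).

Definition collinear3 g x y z := (g y - g x) * (z - x) = (g z - g x) * (y - x).

Definition no_break cs x z := {in cs, forall c, ~~ (x < c < z)}.

Definition pwlin g cs :=
  forall x y z, x < y -> y < z -> no_break cs x z -> collinear3 g x y z.

Lemma no_break_cat cs cs' x z :
  no_break (cs ++ cs') x z <-> no_break cs x z /\ no_break cs' x z.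
Proof.
split=> [nb | [nb nb'] c]; first by split=> c c_in; apply: nb; rewrite mem_cat c_in ?orbT.
by rewrite mem_cat => /orP[/nb | /nb'].
Qed.

Lemma eq_pwlin f g cs : f =1 g -> pwlin g cs -> pwlin f cs.
Proof. by move=> fg Hg x y z xy yz nb; rewrite /collinear3 !fg; apply: Hg. Qed.

Lemma pwlin_sub g cs cs' : {subset cs <= cs'} -> pwlin g cs -> pwlin g cs'.
Proof. by move=> sub Hg x y z xy yz nb; apply: Hg => // c /sub /nb. Qed.

Lemma pwlin_affine a b cs : pwlin (fun t => a * t + b) cs.
Proof. by move=> x y z _ _ _; rewrite /collinear3; ring. Qed.

Lemma pwlin_lincomb n (w : 'I_n -> R) (F : 'I_n -> R -> R) b cs :
  (forall i, pwlin (F i) cs) -> pwlin (fun t => \sum_(i < n) w i * F i t + b) cs.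
Proof.
move=> HF x y z xy yz nb; have addbK u v : u + b - (v + b) = u - v by ring.
rewrite /collinear3 !addbK -!sumrB !mulr_suml.
by apply: eq_bigr => i _; rewrite -!mulrBr -!mulrA (HF i x y z).
Qed.

Lemma pwlin_interp g cs x z t : pwlin g cs -> x < z -> no_break cs x z ->
  x <= t <= z -> g t = g x + (g z - g x) / (z - x) * (t - x).
Proof.
move=> Hg xz nb /andP[xt tz]; have zx0 : z - x != 0 by rewrite subr_eq0 gt_eqF.
have [->|tx] := eqVneq t x; first by rewrite subrr mulr0 addr0.
have [->|tzn] := eqVneq t z; first by rewrite divfK // addrC subrK.
have := Hg x t z; rewrite /collinear3 lt_neqAle eq_sym tx xt lt_neqAle tzn tz => /(_ isT isT nb) e.
apply: (mulIf zx0); rewrite mulrDl -mulrA (mulrC _ (t - x)) mulrA divfK // -e; ring.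
Qed.

End PiecewiseLinear.

Section Alternation.
Variable R : realType.
Implicit Types (g : R -> R) (cs : seq R).

Lemma no_break_subinterval g cs s a b : a < b -> 0 < (g b - g a) * s ->
  exists u v, [/\ a <= u, u < v, v <= b, no_break cs u v & 0 < (g v - g u) * s].
Proof.
(* Induction on a list [l] covering the breakpoints in [(a, b)]: if its head [c]
   lies in [(a, b)], [g] moves in the direction [s] on [(a, c)] or on [(c, b)]. *)
suff: forall (l : seq R) a b, {in cs, forall c, a < c < b -> c \in l} -> a < b ->
    0 < (g b - g a) * s ->
    exists u v, [/\ a <= u, u < v, v <= b, no_break cs u v & 0 < (g v - g u) * s].
  by move=> H ab pos; apply: (H cs) => // c c_in _.
elim=> [|c l IH] {}a {}b cover ab pos.
  by exists a, b; split=> // c /cover nb; apply/negP => /nb.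
have cover' u v : a <= u -> v <= b -> ~~ (u < c < v) ->
    {in cs, forall c', u < c' < v -> c' \in l}.
  move=> au vb ncuv c' c'_in /andP[uc' c'v].
  have := cover c' c'_in; rewrite (le_lt_trans au uc') (lt_le_trans c'v vb) inE => /(_ isT).
  by case: eqP => [e|//]; rewrite -e uc' c'v in ncuv.
have [/andP[ac cb]|ncab] := boolP (a < c < b); last by apply: IH; first exact: cover'.
have [pos_ac|neg_ac] := ltP 0 ((g c - g a) * s).
  have [|u [v [au uv vc nb uvpos]]] := IH a c _ ac pos_ac.
    by apply: cover' => //; [exact: ltW | rewrite ltxx andbF].
  by exists u, v; split=> //; apply: le_trans vc (ltW cb).
have pos_cb : 0 < (g b - g c) * s.
  by rewrite (_ : _ * s = (g b - g a) * s - (g c - g a) * s); [lra | ring].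
have [|u [v [cu uv vb nb uvpos]]] := IH c b _ cb pos_cb.
  by apply: cover' => //; [exact: ltW | rewrite ltxx].
by exists u, v; split=> //; apply: le_trans (ltW ac) cu.
Qed.

Lemma pwlin_sign_change g cs s u1 v1 u2 v2 : pwlin g cs ->
  u1 < v1 -> v1 <= u2 -> u2 < v2 -> no_break cs u1 v1 -> no_break cs u2 v2 ->
  0 < (g v1 - g u1) * s -> 0 < (g u2 - g v2) * s ->
  exists2 c, c \in cs & v1 <= c <= u2.
Proof.
move=> Hg uv1 vu uv2 nb1 nb2 pos1 pos2.
have [/hasP[c c_in cP]|noc] := boolP (has (fun c => v1 <= c <= u2) cs); first by exists c.
have u1v2 : u1 < v2 by apply: lt_trans uv1 (le_lt_trans vu uv2).
have nb : no_break cs u1 v2.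
  move=> c c_in; apply/negP => /andP[u1c cv2].
  have [cv1|v1c] := ltP c v1; first by move: (nb1 c c_in); rewrite u1c cv1.
  have [u2c|cu2] := ltP u2 c; first by move: (nb2 c c_in); rewrite u2c cv2.
  by move/hasP: noc; apply; exists c => //; rewrite v1c cu2.
have ext t : u1 <= t <= v2 -> g t = g u1 + (g v2 - g u1) / (v2 - u1) * (t - u1).
  exact: pwlin_interp Hg u1v2 nb.
set al := (g v2 - g u1) / (v2 - u1) in ext.
have dv1 : g v1 - g u1 = al * (v1 - u1).
  by rewrite ext ?(ltW uv1) ?(le_trans vu (ltW uv2)) //; ring.
have dv2 : g u2 - g v2 = - al * (v2 - u2).
  rewrite (ext u2) ?(ext v2) ?lexx ?(ltW u1v2) ?(ltW uv2) ?(le_trans (ltW uv1) vu) //; ring.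
have p1 : 0 < al * s by move: pos1; rewrite dv1 mulrAC pmulr_lgt0 // subr_gt0.
have p2 : 0 < - al * s by move: pos2; rewrite dv2 mulrAC pmulr_lgt0 // subr_gt0.
by move: p2; rewrite mulNr oppr_gt0 ltNge (ltW p1).
Qed.

Lemma increasing_size_le cs (c : nat -> R) n :
  (forall k, (k < n)%N -> c k \in cs) -> (forall k, (k.+1 < n)%N -> c k < c k.+1) ->
  (n <= size cs)%N.
Proof.
move=> c_in c_up.
have c_lt : {in [pred k | (k < n)%N] &, {homo c : i j / (i < j)%N >-> i < j}}.
  apply: homo_ltn_in => [y x z|i j _ + k /andP[_ kj]|k _]; first exact: lt_trans.
    by rewrite !inE /=; lia.
  by rewrite inE; apply: c_up.
rewrite -(size_iota 0 n) -(size_map c); apply: uniq_leq_size => [|x /mapP[k]].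
  rewrite map_inj_in_uniq ?iota_uniq // => i j; rewrite !mem_iota !add0n /= => iD jD e.
  have [ij|ij|//] := ltngtP i j; [have := c_lt i j | have := c_lt j i];
    by rewrite !inE iD jD e ltxx => /(_ isT isT ij).
by rewrite mem_iota add0n => /= kn ->; apply: c_in.
Qed.

Lemma pwlin_alternating_size g cs N : pwlin g cs ->
  (forall i, (i < N)%N -> g i%:R = (-1) ^+ i) -> (N <= size cs + 2)%N.
Proof.
move=> Hg alt.
have rise k : (k.+1 < N)%N -> 0 < (g k.+1%:R - g k%:R) * (-1) ^+ k.+1.
  move=> kN; rewrite !alt ?(ltnW kN) // mulrBl -expr2 sqrr_sign exprS mulrCA.
  by rewrite -expr2 sqrr_sign mulr1; lra.
(* [uv k] is a breakpoint-free part of [[k, k + 1]] on which [g] moves in the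
   direction [(-1)^(k+1)]; consecutive ones have opposite slopes, so some
   breakpoint [c k] separates them. *)
have /choice[uv Huv] : forall k, exists uv : R * R, (k.+1 < N)%N ->
    [/\ k%:R <= uv.1, uv.1 < uv.2, uv.2 <= k.+1%:R, no_break cs uv.1 uv.2
      & 0 < (g uv.2 - g uv.1) * (-1) ^+ k.+1].
  move=> k; have [kN|] := ltnP k.+1 N; last by move=> Nk; exists (0, 0) => kN; exfalso; lia.
  have [|u [v Huv]] := no_break_subinterval cs (_ : k%:R < k.+1%:R) (rise k kN).
    by rewrite ltr_nat.
  by exists (u, v).
have /choice[c Hc] : forall k, exists c, (k.+2 < N)%N ->
    c \in cs /\ (uv k).2 <= c <= (uv k.+1).1.
  move=> k; have [kN|] := ltnP k.+2 N; last by move=> Nk; exists 0 => kN; exfalso; lia.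
  have [ku1 uv1 vk1 nb1 pos1] := Huv k (ltnW kN).
  have [ku2 uv2 vk2 nb2 pos2] := Huv k.+1 kN.
  have [|c c_in cP] := pwlin_sign_change Hg uv1 (le_trans vk1 ku2) uv2 nb1 nb2 pos1.
    by rewrite -opprB mulNr -mulrN -mulN1r -exprS.
  by exists c.
suff: (N - 2 <= size cs)%N by lia.
apply: (increasing_size_le (c := c)) => k kN; have k2N : (k.+2 < N)%N by lia.
  by case: (Hc k k2N).
have [_ /andP[_ ck]] := Hc k k2N; have [_ /andP[ck1 _]] := Hc k.+1 ltac:(lia).
by have [_ uv1 _ _ _] := Huv k.+1 k2N; apply: le_lt_trans ck (lt_le_trans uv1 ck1).
Qed.

End Alternation.

Section Composition.
Variable R : realType.
Implicit Types (g h : R -> R) (cs : seq R) (x y z w : R).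

Definition separated cs (P : R -> Prop) :=
  forall w1 w2, P w1 -> P w2 -> w1 < w2 -> exists2 c, c \in cs & w1 < c < w2.

(* A separated set is ranked injectively by the number of breakpoints below it. *)
Lemma separated_finite cs P : separated cs P ->
  exists2 l : seq R, (size l <= (size cs).+1)%N & forall w, P w -> w \in l.
Proof.
move=> sep; pose rank w := count (fun c => c < w) cs.
have rank_lt w1 w2 : P w1 -> P w2 -> w1 < w2 -> (rank w1 < rank w2)%N.
  move=> P1 P2 w12; have [c c_in /andP[w1c cw2]] := sep w1 w2 P1 P2 w12.
  apply: (count_ltn_sub (x := c)); rewrite //= ?cw2 -?leNgt ?(ltW w1c) //.
  by move=> d /= /lt_trans; apply.
have rank_inj w1 w2 : P w1 -> P w2 -> rank w1 = rank w2 -> w1 = w2.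
  move=> P1 P2 e; case: (ltgtP w1 w2) => // [w12|w21].
  - by have := rank_lt _ _ P1 P2 w12; rewrite e ltnn.
  - by have := rank_lt _ _ P2 P1 w21; rewrite e ltnn.
have /choice[pick Hpick] : forall n : nat,
    exists w, (exists2 w', P w' & rank w' = n) -> P w /\ rank w = n.
  move=> n; have [[w' Pw' rw']|none] := pselect (exists2 w', P w' & rank w' = n).
    by exists w'.
  by exists 0 => /none.
exists [seq pick n | n <- iota 0 (size cs).+1]; first by rewrite size_map size_iota.
move=> w Pw; apply/mapP; exists (rank w); first by rewrite mem_iota ltnS count_size.
have [Ppick rpick] := Hpick (rank w) (ex_intro2 _ _ w Pw erefl).
exact: rank_inj Pw Ppick (esym rpick).
Qed.

Lemma pwlin_flat h cs x z w1 w2 t : pwlin h cs -> x < z -> no_break cs x z ->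
  x <= w1 -> w1 < w2 -> w2 <= z -> h w1 = h w2 -> x <= t <= z -> h t = h x.
Proof.
move=> Hh xz nb xw1 w12 w2z e tP; have lin := pwlin_interp Hh xz nb.
set al := (h z - h x) / (z - x) in lin.
have w1_in : x <= w1 <= z by rewrite xw1 (le_trans (ltW w12) w2z).
have w2_in : x <= w2 <= z by rewrite w2z (le_trans xw1 (ltW w12)).
have : h w2 - h w1 = al * (w2 - w1) by rewrite (lin w2 w2_in) (lin w1 w1_in); ring.
rewrite e subrr => /esym/eqP; rewrite mulf_eq0 subr_eq0 (gt_eqF w12) orbF => /eqP al0.
by rewrite lin // al0 mul0r addr0.
Qed.

Lemma pwlin_ivt h cs x z c : pwlin h cs -> x < z -> no_break cs x z ->
  (h x < c < h z) || (h z < c < h x) -> exists2 w, x < w < z & h w = c.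
Proof.
move=> Hh xz nb c_btw; have zx : 0 < z - x by rewrite subr_gt0.
have hxz : h z - h x != 0.
  rewrite subr_eq0; case/orP: c_btw => /andP[xc cz].
    by rewrite (gt_eqF (lt_trans xc cz)).
  by rewrite (lt_eqF (lt_trans xc cz)).
pose r := (c - h x) / (h z - h x).
have r01 : 0 < r < 1.
  have frac (a b : R) : 0 < a -> a < b -> 0 < a / b < 1.
    move=> a0 ab; have b0 := lt_trans a0 ab.
    by rewrite divr_gt0 //= ltr_pdivrMr // mul1r.
  case/orP: c_btw => /andP[xc cz]; first by apply: frac; lra.
  by rewrite /r -mulrNN -invrN !opprB; apply: frac; lra.
have /andP[r0 r1] := r01.
have rzx : 0 < r * (z - x) < z - x.
  by rewrite mulr_gt0 //= -[X in _ < X]mul1r ltr_pM2r.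
have w_in : x < x + r * (z - x) < z by apply/andP; split; lra.
exists (x + r * (z - x)) => //.
rewrite (pwlin_interp Hh xz nb); last by case/andP: w_in => /ltW -> /ltW ->.
by rewrite /r; field; rewrite hxz gt_eqF.
Qed.

Definition kink h cs c w :=
  h w = c /\ exists x z, [/\ x < w, w < z, no_break cs x z & h x != h z].

(* Two kinks at the same level with no breakpoint between them would make [h]
   affine on an interval where it takes the same value twice, hence flat. *)
Lemma kink_separated h cs c : pwlin h cs -> separated cs (kink h cs c).
Proof.
move=> Hh w1 w2 [hw1 [x1 [z1 [xw1 wz1 nb1 ne]]]] [hw2 [x2 [z2 [xw2 wz2 nb2 _]]]] w12.
have [/hasP[d d_in dP]|nd] := boolP (has (fun d => w1 < d < w2) cs); first by exists d.
have nb : no_break cs x1 (Num.max z1 z2).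
  move=> d d_in; apply/negP => /andP[x1d]; rewrite lt_max => dz.
  have [dz1|z1d] := ltP d z1; first by move: (nb1 d d_in); rewrite x1d dz1.
  have [dw2|w2d] := ltP d w2.
    by move/hasP: nd; apply; exists d; rewrite // dw2 (lt_le_trans wz1 z1d).
  move: (nb2 d d_in) dz; rewrite (lt_le_trans xw2 w2d) /= => /negbTE ->.
  by rewrite orbF ltNge z1d.
have x1z : x1 < Num.max z1 z2 by rewrite lt_max (lt_trans xw1 wz1).
have w2z : w2 <= Num.max z1 z2 by rewrite le_max (ltW wz2) orbT.
have z1_in : x1 <= z1 <= Num.max z1 z2 by rewrite le_max lexx (ltW (lt_trans xw1 wz1)).
have flat := pwlin_flat Hh x1z nb (ltW xw1) w12 w2z (etrans hw1 (esym hw2)) z1_in.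
by rewrite flat eqxx in ne.
Qed.

Lemma kinks_finite h cs S : pwlin h cs -> exists2 W : seq R,
  (size W <= size S * (size cs).+1)%N & forall c w, c \in S -> kink h cs c w -> w \in W.
Proof.
move=> Hh; elim: S => [|c S [W sW HW]]; first by exists [::].
have [l sl Hl] := separated_finite (kink_separated (c := c) Hh).
exists (l ++ W); first by rewrite size_cat mulSn leq_add.
move=> c' w; rewrite inE mem_cat => /orP[/eqP-> /Hl -> // | c'S /(HW _ _ c'S) ->].
by rewrite orbT.
Qed.

Lemma collinear3_sym g x y z : collinear3 g z y x -> collinear3 g x y z.
Proof.
rewrite /collinear3 => e; apply/eqP; rewrite -subr_eq0; apply/eqP.
transitivity (- ((g y - g z) * (x - z) - (g x - g z) * (y - z))); first ring.
by rewrite e subrr oppr0.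
Qed.

(* New breakpoints of [g \o h] only appear at kinks of [h] lying over
   breakpoints of [g]; there are at most [size cs + 1] of them per breakpoint. *)
Lemma pwlin_comp g S h cs : pwlin g S -> pwlin h cs -> exists2 W : seq R,
  (size W <= size S * (size cs).+1)%N & pwlin (fun t => g (h t)) (cs ++ W).
Proof.
move=> Hg Hh; have [W sW HW] := kinks_finite S Hh; exists W => // x y z xy yz.
move/no_break_cat => [nb nbW]; have xz := lt_trans xy yz.
have yP : x <= y <= z by rewrite !ltW.
set al := (h z - h x) / (z - x).
have dz : h z - h x = al * (z - x) by rewrite divfK // subr_eq0 gt_eqF.
have dy : h y - h x = al * (y - x) by rewrite (pwlin_interp Hh xz nb yP) -/al; ring.
have [hxz|hxz] := eqVneq (h x) (h z).
  have hy : h y = h x := pwlin_flat Hh xz nb (lexx x) xz (lexx z) hxz yP.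
  by rewrite /collinear3 hy -hxz !subrr !mul0r.
have al0 : al != 0.
  by apply: contra_neq hxz => al0; apply/eqP; rewrite eq_sym -subr_eq0 dz al0 mul0r.
have noS c : c \in S -> ~~ ((h x < c < h z) || (h z < c < h x)).
  move=> cS; apply/negP => /(pwlin_ivt Hh xz nb)[w /andP[xw wz] hw].
  have : w \in W by apply: (HW c) => //; split=> //; exists x, z.
  by move/nbW; rewrite xw wz.
have dzy : h z - h y = al * (z - y).
  have -> : h z - h y = (h z - h x) - (h y - h x) by ring.
  by rewrite dz dy; ring.
have hy_btw : (h x < h y < h z) || (h z < h y < h x).
  have yx : 0 < y - x by rewrite subr_gt0.
  have zy : 0 < z - y by rewrite subr_gt0.
  case: (ltgtP al 0) al0 => // al_sgn _; apply/orP; [right | left].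
    by rewrite -[h z < _]subr_lt0 -[h y < _]subr_lt0 dzy dy; apply/andP; split; nra.
  by rewrite -[h x < _]subr_gt0 -[h y < _]subr_gt0 dzy dy; apply/andP; split; nra.
have col : collinear3 g (h x) (h y) (h z).
  case/orP: hy_btw => /andP[lo hi].
    by apply: Hg => // c /noS; rewrite negb_or => /andP[].
  by apply/collinear3_sym/Hg => // c /noS; rewrite negb_or => /andP[].
move: col; rewrite /collinear3 dz dy => col; apply: (mulIf al0).
by rewrite -!mulrA ![(_ - x) * al]mulrC col.
Qed.

End Composition.

Section Partition.
Local Open Scope classical_set_scope.
Variable R : realType.
Implicit Types (f : R -> R) (J : interval R) (x y z t : R).

Lemma continuous_affine_ends f x z a b : continuous f -> x < z ->
  (forall t, x < t -> t < z -> f t = a * t + b) -> f x = a * x + b /\ f z = a * z + b.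
Proof.
move=> fC xz faff; pose g t := f t - (a * t + b).
have gC : continuous g.
  move=> t; apply: cvgB; first exact: fC.
  by apply: cvgD; [apply: cvgM; [exact: cvg_cst | exact: cvg_id] | exact: cvg_cst].
have gx : g x = 0.
  have c0 : g @ x^'+ --> 0.
    apply: cvg_near_cst; near=> t; have xt : x < t by near: t; exact: nbhs_right_gt.
    by rewrite /g faff ?subrr //; near: t; exact: nbhs_right_lt.
  exact: cvg_unique _ (cvg_at_right_filter (gC x)) c0.
have gz : g z = 0.
  have c0 : g @ z^'- --> 0.
    apply: cvg_near_cst; near=> t; have tz : t < z by near: t; exact: nbhs_left_lt.
    by rewrite /g faff ?subrr //; near: t; exact: nbhs_left_gt.
  exact: cvg_unique _ (cvg_at_left_filter (gC z)) c0.
by split; apply/eqP; rewrite -subr_eq0 -/(g _) ?gx ?gz.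
Unshelve. all: by end_near.
Qed.

Definition right_end J : option R :=
  if J is Interval _ (BSide _ s) then Some s else None.

Lemma right_end_ge J q s : q \in J -> right_end J = Some s -> q <= s.
Proof.
case: J => l [[] r|[]] //; rewrite itv_boundlr => /andP[_] /= + [<-];
  by rewrite bnd_simp // => /ltW.
Qed.

Lemma itv_mem_right J q t : q \in J -> q <= t ->
  (forall s, right_end J = Some s -> t < s) -> t \in J.
Proof.
case: J => l r; rewrite !itv_boundlr => /andP[lq qr] qt ts.
rewrite (le_trans lq) ?bnd_simp //; case: r qr ts => [[] s|[]] //= _ /(_ s erefl).
  by rewrite bnd_simp.
by rewrite bnd_simp => /ltW.
Qed.

(* The finite right endpoints of the pieces serve as breakpoints; the piece
   containing a point beyond all of them is unbounded above. *)
Lemma pw_affine_partition_pwlin f p : continuous f -> pw_affine_partition f p ->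
  exists2 S : seq R, (size S <= p.-1)%N & pwlin f S.
Proof.
move=> fC [I [Ipart Iaff]]; pose S := pmap (fun i => right_end (I i)) (enum 'I_p).
have S_end i s : right_end (I i) = Some s -> s \in S.
  by move=> e; rewrite mem_pmap -e (map_f (fun j => right_end (I j))) ?mem_enum.
have [i0 [Mi0 _]] := Ipart (1 + \sum_(s <- S) `|s|).
have i0_unbounded : right_end (I i0) = None.
  case e: (right_end (I i0)) => [s|] //.
  have sM : s < 1 + \sum_(t <- S) `|t|.
    rewrite (big_rem s (S_end _ _ e)) /=; apply: ltr_pwDl => //.
    by rewrite (le_trans (ler_norm s)) // lerDl sumr_ge0.
  by have := right_end_ge Mi0 e; rewrite leNgt sM.
exists S.
  rewrite size_pmap -ltnS (ltn_predK (ltn_ord i0)).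
  rewrite -[X in (_ < X)%N]card_ord cardE -count_predT.
  by apply: (count_ltn_sub (x := i0)); rewrite ?mem_enum //= i0_unbounded.
move=> x y z xy yz nb.
have in_same a q t : q \in I a -> x < q -> q <= t -> t < z -> t \in I a.
  move=> qa xq qt tz; apply: (itv_mem_right qa qt) => s e.
  have := nb s (S_end a s e); rewrite (lt_le_trans xq (right_end_ge qa e)) /= -leNgt.
  exact: lt_le_trans tz.
have [a [ya ua]] := Ipart y.
have all_in t : x < t -> t < z -> t \in I a.
  move=> xt tz; have [yt|ty] := leP y t; first exact: in_same a y t ya xy yt tz.
  have [b [tb _]] := Ipart t; by rewrite (ua b (in_same b t y tb xt (ltW ty) yz)).
have [al [be affa]] := Iaff a.
have fa t : x < t -> t < z -> f t = al * t + be by move=> xt tz; apply/affa/all_in.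
have [fx fz] := continuous_affine_ends fC (lt_trans xy yz) fa.
by rewrite /collinear3 fx fz (fa y xy yz); ring.
Qed.

Lemma pwlin_relu : pwlin (@relu R) [:: 0].
Proof.
move=> x y z xy yz /(_ 0 (mem_head _ _)); rewrite negb_and -!leNgt.
have xy' := ltW xy; have xz := ltW (lt_trans xy yz); have yz' := ltW yz.
case/orP=> [x0|z0].
  have relu_id t : x <= t -> relu t = t by move=> xt; rewrite /relu max_l // (le_trans x0).
  by rewrite /collinear3 !relu_id // mulrC.
have relu_0 t : t <= z -> relu t = 0 by move=> tz; rewrite /relu max_r // (le_trans tz).
by rewrite /collinear3 !relu_0 // subrr !mul0r.
Qed.

End Partition.

Section Network.
Variable R : realType.
Variables (sigma : R -> R) (S : seq R).
Hypothesis sigma_pwlin : pwlin sigma S.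

Lemma pwlin_sel_layer k d d' (W : 'M[R]_(d', d)) (b : 'cV[R]_d') (a : R -> 'cV[R]_d) cs :
  (forall i, pwlin (fun t => a t i 0) cs) -> exists2 W' : seq R,
    (size W' <= k * (size S * (size cs).+1))%N &
    forall j, pwlin (fun t => sel_act sigma k (W *m a t + b) j 0) (cs ++ W').
Proof.
move=> a_pwlin; set m := (size S * (size cs).+1)%N.
have z_pwlin j : pwlin (fun t => (W *m a t + b) j 0) cs.
  by apply: eq_pwlin (pwlin_lincomb (W j) (b j 0) a_pwlin) => t; rewrite !mxE.
have /choice[Wj HWj] : forall j : 'I_d', exists Wj : seq R, (size Wj <= (j < k) * m)%N /\
    pwlin (fun t => sel_act sigma k (W *m a t + b) j 0) (cs ++ Wj).
  move=> j; have [jk|kj] := ltnP j k.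
    have [Wj sWj Hj] := pwlin_comp sigma_pwlin (z_pwlin j).
    by exists Wj; split; [rewrite mul1n | apply: eq_pwlin Hj => t; rewrite mxE jk].
  exists [::]; split=> //; rewrite cats0.
  by apply: eq_pwlin (z_pwlin j) => t; rewrite mxE ltnNge kj.
exists (flatten [seq Wj j | j <- enum 'I_d']).
  rewrite size_flatten /shape -map_comp sumnE big_map big_enum /=.
  apply: (@leq_trans (\sum_(j < d') (j < k) * m)).
    by apply: leq_sum => j _; case: (HWj j).
  by rewrite -big_distrl /= sum_ord_ltn leq_mul // geq_minr.
move=> j; apply: pwlin_sub (proj2 (HWj j)) => x; rewrite !mem_cat => /orP[-> // | xW].
by apply/orP; right; apply/flattenP; exists (Wj j); rewrite // map_f ?mem_enum.
Qed.

(* Memorizing the alternating labels [(-1)^i] at the collinear inputs [i e_0]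
   forces the network, restricted to that line, to have [N - 2] breakpoints. *)
Lemma memorizes_le k1 k2 dx d1 d2 N : (0 < dx)%N -> memorizes sigma k1 k2 dx d1 d2 N ->
  (N <= k1 * size S + k2 * (size S * (k1 * size S).+1) + 2)%N.
Proof.
move=> dx_gt0 mem; pose e : 'cV[R]_dx := delta_mx (Ordinal dx_gt0) 0.
have x_inj : injective (fun i : 'I_N => i%:R *: e).
  move=> i j /(congr1 (fun v : 'cV_dx => v (Ordinal dx_gt0) 0)) /eqP.
  by rewrite !mxE !eqxx !mulr1 eqr_nat => /eqP /val_inj.
have y_bnd (i : 'I_N) : -1 <= ((-1) ^+ i : R) <= 1.
  by rewrite -ler_norml normrX normrN normr1 expr1n.
have [W1 [b1 [W2 [b2 [W3 [b3 fit]]]]]] := mem _ x_inj _ y_bnd.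
pose a0 t : 'cV[R]_dx := t *: e.
have a0_pwlin i : pwlin (fun t => a0 t i 0) [::].
  by apply: eq_pwlin (pwlin_affine (e i 0) 0 (cs := [::])) => t; rewrite !mxE addr0 mulrC.
have [C1 sC1 a1_pwlin] := pwlin_sel_layer k1 W1 b1 a0_pwlin.
have [C2 sC2 a2_pwlin] := pwlin_sel_layer k2 W2 b2 a1_pwlin.
have g_pwlin : pwlin (fun t => net sigma k1 k2 W1 b1 W2 b2 W3 b3 (a0 t)) (([::] ++ C1) ++ C2).
  by apply: eq_pwlin (pwlin_lincomb (W3 0) b3 a2_pwlin) => t; rewrite /net mxE.
have := pwlin_alternating_size g_pwlin (fun i iN => fit (Ordinal iN)).
rewrite !size_cat /= add0n => /leq_trans; apply; rewrite leq_add2r.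
rewrite /= muln1 in sC1; apply: (leq_add sC1); apply: (leq_trans sC2).
by rewrite leq_mul2l leq_mul2l ltnS sC1 !orbT.
Qed.

End Network.

Lemma capacity_arith (R : realType) k1 k2 d2 s q N : (1 <= d2)%N -> (s <= q)%N ->
  (N <= k1 * s + k2 * (s * (k1 * s).+1) + 2)%N ->
  N%:R <= k1%:R * k2%:R * q%:R ^+ 2 + k2%:R * q%:R + k1%:R * d2%:R * q%:R + 2 :> R.
Proof.
move=> d2_ge1 sq NB; rewrite -natrX -!natrM -!natrD ler_nat (leq_trans NB) //.
have k1q : (k1 * s <= k1 * q)%N by rewrite leq_mul2l sq orbT.
nia.
Qed.

Theorem corollary1 (R : realType) (dx d1 d2 : nat)
  (hdx : (1 <= dx)%N) (hd1 : (1 <= d1)%N) (hd2 : (1 <= d2)%N)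
  (alpha1 alpha2 : R) (k1 k2 : nat)
  (ha1 : 0 <= alpha1 <= 1) (ha2 : 0 <= alpha2 <= 1)
  (hk1 : alpha1 * d1%:R = k1%:R) (hk2 : alpha2 * d2%:R = k2%:R) :
  (forall (sigma : R -> R) (p : nat),
     continuous sigma -> (2 <= p)%N -> has_linear_pieces sigma p ->
     forall N : nat, memorizes sigma k1 k2 dx d1 d2 N ->
     N%:R <= alpha1 * alpha2 * d1%:R * d2%:R * p%:R * (p%:R - 1)
             + alpha2 * d2%:R * (p%:R - 1)
             + alpha1 * (1 - alpha2) * d1%:R * d2%:R * (p%:R - 1) + 2)
  /\
  (forall N : nat, memorizes (@relu R) k1 k2 dx d1 d2 N ->
     N%:R <= alpha1 * (1 + alpha2) * d1%:R * d2%:R + alpha2 * d2%:R + 2).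
Proof.
split=> [sigma p sigmaC p_ge2 [part _] N mem | N mem].
  have [S sS S_pwlin] := pw_affine_partition_pwlin sigmaC part.
  have := capacity_arith R hd2 sS (memorizes_le S_pwlin hdx mem).
  have -> : p%:R = p.-1%:R + 1 :> R by rewrite natr1 prednK // ltnW.
  move/le_trans; apply; rewrite -hk1 -hk2 le_eqVlt; apply/orP; left; apply/eqP; ring.
have := capacity_arith R hd2 (leqnn 1) (memorizes_le (@pwlin_relu R) hdx mem).
move/le_trans; apply; rewrite -hk1 -hk2 le_eqVlt; apply/orP; left; apply/eqP; ring.
Qed.
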